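(* For every team $R$ of three robots, the Equivalent Oscillation problem $EqOsc$ is solvable by $R$ in the model $\mathcal{FSTA}$ under the fully synchronous scheduler with limited visibility, i.e. $EqOsc\in Task(\mathcal{FSTA}, FSYNCH, \mathcal{L.V.}; R)$.
   Context: Robots are anonymous, identical, autonomous points in the Euclidean plane. Each has its own local coordinate system, with no common chirality. Robots operate in Look-Compute-Move cycles: an instantaneous snapshot of visible robot positions, a computation of a destination, then a move. In $\mathcal{FSTA}$, each robot has a persistent light with colors from a finite set, set at the end of Compute and visible only to its owner; it serves as finite internal memory, and robots are silent. Under the fully synchronous scheduler, all robots are activated in every round. Under limited visibility, a robot sees only robots within a fixed distance $V_r$ (same for all robots) of its current position, and the initial visibility graph (robots adjacent iff they see each other) is connected. Problem Equivalent Oscillation ($EqOsc$): three robots $r_1,r_2,r_3$ are initially at collinear points $B,A,C$ respectively, with $AB=AC=d$. Let $B',C'$ be the points on this line (on segments $AB$, $AC$) with $AB'=AC'=\frac{2d}{3}$. The robots $r_1$ and $r_3$ must always be equidistant from $r_2$ (which is at $A$). They must also oscillate: if at some round $t$, $r_1,r_3$ are at $B,C$, then at some round $t'>t$ they are at $B',C'$; and if at round $t'$ they are at $B',C'$, then at some round $t''>t'$ they are at $B,C$. *)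

From Stdlib Require Fin.
From Stdlib Require Import Reals Lra Relations.
Open Scope R_scope.

Definition point : Type := (R * R)%type.
Definition padd (p q : point) : point := (fst p + fst q, snd p + snd q).
Definition psub (p q : point) : point := (fst p - fst q, snd p - snd q).
Definition pscale (k : R) (p : point) : point := (k * fst p, k * snd p).
Definition dist (p q : point) : R :=
  sqrt ((fst p - fst q) ^ 2 + (snd p - snd q) ^ 2).
Definition collinear (p q r : point) : Prop :=
  (fst q - fst p) * (snd r - snd p) - (snd q - snd p) * (fst r - fst p) = 0.

Inductive robot : Type := r1 | r2 | r3.

(** A local coordinate system (relative to the robot's current position,
    which is its origin): a linear similarity of the plane, i.e. an
    optional reflection (chirality) followed by multiplication by the
    nonzero complex number fa + i fb (rotation + positive scaling = unit). *)
Record frame : Type := mkFrame { fa : R; fb : R; frefl : bool }.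
Definition frame_valid (f : frame) : Prop := fa f ^ 2 + fb f ^ 2 > 0.

Definition to_local (f : frame) (v : point) : point :=
  let x := fst v in
  let y := if frefl f then - snd v else snd v in
  (fa f * x - fb f * y, fb f * x + fa f * y).

Definition from_local (f : frame) (w : point) : point :=
  let n := fa f ^ 2 + fb f ^ 2 in
  let x := (fa f * fst w + fb f * snd w) / n in
  let y := (fa f * snd w - fb f * fst w) / n in
  (x, if frefl f then - y else y).

(** A snapshot: the SET of positions (in local coordinates) of the robots
    visible to the observer (including itself, at the origin).
    Robots are anonymous: no identities, no multiplicities. *)
Definition snapshot : Type := point -> Prop.

(** FSTA algorithm with colour set K: from the robot's own (persistent,
    private) light colour and the snapshot, compute the new colour and the
    destination (in local coordinates). *)
Definition algorithm (K : Type) : Type := K -> snapshot -> (K * point).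

Definition sees (Vr : R) (pos : robot -> point) (i j : robot) : Prop :=
  dist (pos i) (pos j) <= Vr.

Definition snap (Vr : R) (fr : robot -> frame) (pos : robot -> point)
  (i : robot) : snapshot :=
  fun q => exists j, sees Vr pos i j /\ q = to_local (fr i) (psub (pos j) (pos i)).

(** One fully synchronous round: every robot Looks, Computes, Moves
    (rigid moves: the destination is reached). *)
Definition step {K : Type} (alg : algorithm K) (Vr : R) (fr : robot -> frame)
  (s : (robot -> point) * (robot -> K)) : (robot -> point) * (robot -> K) :=
  let pos := fst s in
  let col := snd s in
  (fun i => padd (pos i) (from_local (fr i) (snd (alg (col i) (snap Vr fr pos i)))),
   fun i => fst (alg (col i) (snap Vr fr pos i))).

Fixpoint exec {K : Type} (alg : algorithm K) (c0 : K) (Vr : R)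
  (fr : robot -> frame) (pos0 : robot -> point) (t : nat)
  : (robot -> point) * (robot -> K) :=
  match t with
  | O => (pos0, fun _ => c0)
  | S t' => step alg Vr fr (exec alg c0 Vr fr pos0 t')
  end.

Definition vis_connected (Vr : R) (pos : robot -> point) : Prop :=
  forall i j, clos_refl_trans robot (sees Vr pos) i j.

Definition EqOsc_spec (A B C : point) (pos : nat -> robot -> point) : Prop :=
  let B' := padd A (pscale (2/3) (psub B A)) in
  let C' := padd A (pscale (2/3) (psub C A)) in
  (forall t, pos t r2 = A /\ dist (pos t r1) (pos t r2) = dist (pos t r3) (pos t r2)) /\
  (forall t, pos t r1 = B -> pos t r3 = C ->
     exists t', (t < t')%nat /\ pos t' r1 = B' /\ pos t' r3 = C') /\
  (forall t', pos t' r1 = B' -> pos t' r3 = C' ->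
     exists t'', (t' < t'')%nat /\ pos t'' r1 = B /\ pos t'' r3 = C).

(** EqOsc ∈ Task(FSTA, FSYNCH, L.V.; R) for the three-robot team R:
    one algorithm with finitely many colours (Fin.t N) and an initial colour
    works for every visibility range, every admissible initial configuration
    and every choice of local coordinate systems. *)
Definition EqOsc_solvable_FSTA_FSYNCH_LV : Prop :=
  exists (N : nat) (c0 : Fin.t N) (alg : algorithm (Fin.t N)),
    forall (Vr d : R) (A B C : point) (fr : robot -> frame),
      (forall i, frame_valid (fr i)) ->
      0 < Vr -> 0 < d ->
      collinear B A C -> B <> C ->
      dist A B = d -> dist A C = d ->
      let pos0 := fun i => match i with r1 => B | r2 => A | r3 => C end in
      vis_connected Vr pos0 ->
      EqOsc_spec A B C (fun t => fst (exec alg c0 Vr fr pos0 t)).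

(** The configuration stays symmetric about [A]: the robots sit at
    [A + v], [A], [A - v].  An end robot sees the centre robot and nothing
    but the multiples [0], [q], [2 q] of the vector [q] pointing to the
    centre, a pattern that every local frame preserves because frames are
    linear similarities; the centre robot sees two opposite non-zero vectors
    and so knows it must stay put.  An end robot moves by [q / 3] (distance
    [d] to [2 d / 3]) or by [- q / 2] (back to [d]) according to its light,
    which it toggles every round, so both end robots act in lockstep.
    Connectivity of the initial visibility graph forces [d <= Vr], so these
    sightings happen in every round. *)

From Pilot Require Import Defs.
From Stdlib Require Import Reals.
From Stdlib Require Import Lra Lia Relations ClassicalEpsilon FunctionalExtensionality.
Open Scope R_scope.

Ltac point_eq :=
  repeat match goal with p : point |- _ => destruct p end;
  unfold padd, psub, pscale; simpl; f_equal; ring.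

Lemma pscale_0 (u : point) : pscale 0 u = (0, 0).
Proof. point_eq. Qed.

Lemma pscale_1 (u : point) : pscale 1 u = u.
Proof. point_eq. Qed.

Lemma pscale_mul (a b : R) (u : point) : pscale (a * b) u = pscale a (pscale b u).
Proof. point_eq. Qed.

Lemma pscale_neq0 (k : R) (u : point) : k <> 0 -> u <> (0, 0) -> pscale k u <> (0, 0).
Proof.
  intros Hk Hu E; apply Hu; rewrite <- (pscale_1 u), <- (Rinv_l k Hk), pscale_mul, E.
  point_eq.
Qed.

Definition norm (v : point) : R := sqrt (fst v ^ 2 + snd v ^ 2).

Lemma norm_ge0 (v : point) : 0 <= norm v.
Proof. apply sqrt_pos. Qed.

Lemma dist_norm (p q : point) : Defs.dist p q = norm (psub p q).
Proof. reflexivity. Qed.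

Lemma norm_pscale (k : R) (v : point) : norm (pscale k v) = Rabs k * norm v.
Proof.
  destruct v as [x y]; unfold norm, pscale; simpl.
  rewrite <- sqrt_Rsqr_abs, <- sqrt_mult_alt by apply Rle_0_sqr.
  f_equal; unfold Rsqr; ring.
Qed.

Lemma from_to_local (f : frame) (v : point) :
  frame_valid f -> from_local f (to_local f v) = v.
Proof.
  unfold frame_valid; intros Hf.
  destruct v as [x y], f as [a b [|]]; unfold from_local, to_local; simpl in *;
    f_equal; field; lra.
Qed.

Lemma to_local_pscale (f : frame) (k : R) (v : point) :
  to_local f (pscale k v) = pscale k (to_local f v).
Proof.
  destruct v as [x y], f as [a b [|]]; unfold to_local, pscale; simpl; f_equal; ring.
Qed.

Lemma to_local_neq0 (f : frame) (v : point) :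
  frame_valid f -> v <> (0, 0) -> to_local f v <> (0, 0).
Proof.
  intros Hf Hv E; apply Hv.
  rewrite <- (from_to_local f v Hf), E.
  destruct f as [a b [|]]; unfold from_local; simpl; f_equal; unfold Rdiv; ring.
Qed.

Definition end_view (S : snapshot) (q : point) : Prop :=
  q <> (0, 0) /\ S q /\ forall x, S x -> x = (0, 0) \/ x = q \/ x = pscale 2 q.

Definition center_dir (S : snapshot) : point :=
  match excluded_middle_informative (exists q, end_view S q) with
  | left H => proj1_sig (constructive_indefinite_description _ H)
  | right _ => (0, 0)
  end.

Lemma end_view_unique (S : snapshot) (q q' : point) :
  end_view S q -> end_view S q' -> q' = q.
Proof.
  intros [Hq [Sq Hall]] [Hq' [Sq' Hall']].
  destruct q as [x y], q' as [x' y'].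
  destruct (Hall _ Sq') as [E|[E|E]]; [contradiction | exact E |].
  exfalso; apply Hq.
  destruct (Hall' _ Sq) as [F|[F|F]]; unfold pscale in *; simpl in *;
    injection E; injection F; intros; f_equal; lra.
Qed.

Lemma center_dir_end (S : snapshot) (q : point) : end_view S q -> center_dir S = q.
Proof.
  intros Hq; unfold center_dir.
  destruct (excluded_middle_informative _) as [H | H].
  - destruct (constructive_indefinite_description _ H) as [q' Hq']; simpl.
    exact (end_view_unique S q q' Hq Hq').
  - exfalso; apply H; exists q; exact Hq.
Qed.

Lemma center_dir_center (S : snapshot) (v : point) :
  v <> (0, 0) -> S v -> S (pscale (-1) v) -> center_dir S = (0, 0).
Proof.
  intros Hv Sv Sv'; unfold center_dir.
  destruct (excluded_middle_informative _) as [H | _]; [exfalso | reflexivity].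
  destruct H as [q [Hq [_ Hall]]].
  destruct v as [x y], q as [a b].
  destruct (Hall _ Sv) as [E|[E|E]], (Hall _ Sv') as [F|[F|F]];
    unfold pscale in *; simpl in *; injection E; injection F; intros;
    first [apply Hq; f_equal; lra | apply Hv; f_equal; lra].
Qed.

Definition offset (i : robot) : R := match i with r1 => 1 | r2 => 0 | r3 => -1 end.

Definition config (A v : point) (i : robot) : point := padd A (pscale (offset i) v).

Lemma config_r2 (A v : point) : config A v r2 = A.
Proof. unfold config; point_eq. Qed.

Lemma psub_config (A v : point) (i j : robot) :
  psub (config A v i) (config A v j) = pscale (offset i - offset j) v.
Proof. unfold config; point_eq. Qed.

Lemma dist_config (A v : point) (i j : robot) :
  Defs.dist (config A v i) (config A v j) = Rabs (offset i - offset j) * norm v.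
Proof. rewrite dist_norm, psub_config; apply norm_pscale. Qed.

Lemma Rabs_offset_sub_r2_le (i j : robot) : i = r2 \/ j = r2 -> Rabs (offset i - offset j) <= 1.
Proof.
  intros Hij; destruct i, j; simpl; destruct Hij; try discriminate;
    unfold Rabs; destruct (Rcase_abs _); lra.
Qed.

Lemma Rabs_offset_sub_lt_1 (i j : robot) : Rabs (offset i - offset j) < 1 -> i = j.
Proof.
  destruct i, j; simpl; intros Hlt; try reflexivity; exfalso;
    revert Hlt; unfold Rabs; destruct (Rcase_abs _); lra.
Qed.

Lemma robot_r2_dec (i : robot) : {i = r2} + {i <> r2}.
Proof. destruct i; [right | left | right]; congruence. Qed.

Lemma offset_from_end (i j : robot) : i <> r2 ->
  offset j - offset i = 0 \/ offset j - offset i = - offset i \/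
  offset j - offset i = 2 * - offset i.
Proof. destruct i, j; simpl; intros Hi; try congruence; lra. Qed.

Lemma clos_refl_trans_eq (X : Type) (Rel : X -> X -> Prop) :
  (forall x y, Rel x y -> x = y) -> forall x y, clos_refl_trans X Rel x y -> x = y.
Proof. intros Hrel x y Hxy; induction Hxy; congruence || auto. Qed.

Lemma sees_config_eq (Vr : R) (A v : point) :
  Vr < norm v -> forall i j, sees Vr (config A v) i j -> i = j.
Proof.
  intros Hlt i j; unfold sees; rewrite dist_config; intros Hij.
  apply Rabs_offset_sub_lt_1.
  pose proof (norm_ge0 v); nra.
Qed.

Lemma vis_connected_config_norm_le (Vr : R) (A v : point) :
  vis_connected Vr (config A v) -> norm v <= Vr.
Proof.
  intros Hconn; apply Rnot_lt_le; intros Hlt.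
  discriminate (clos_refl_trans_eq _ _ (sees_config_eq Vr A v Hlt) r1 r2 (Hconn r1 r2)).
Qed.

Section Snapshots.

Variables (Vr : R) (fr : robot -> frame) (A v : point).
Hypotheses (Hfr : forall i, frame_valid (fr i)) (Hv : v <> (0, 0)) (HvV : norm v <= Vr).

Lemma snap_config_r2 (i j : robot) : i = r2 \/ j = r2 ->
  snap Vr fr (config A v) i (pscale (offset j - offset i) (to_local (fr i) v)).
Proof.
  intros Hij; exists j; split.
  - unfold sees; rewrite dist_config.
    pose proof (Rabs_offset_sub_r2_le i j Hij); pose proof (norm_ge0 v); nra.
  - rewrite psub_config, to_local_pscale; reflexivity.
Qed.

Lemma snap_config_inv (i : robot) (x : point) : snap Vr fr (config A v) i x ->
  exists j, x = pscale (offset j - offset i) (to_local (fr i) v).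
Proof.
  intros [j [_ ->]]; exists j; rewrite psub_config, to_local_pscale; reflexivity.
Qed.

Lemma center_dir_config (i : robot) :
  center_dir (snap Vr fr (config A v) i) = pscale (- offset i) (to_local (fr i) v).
Proof.
  assert (Hu : to_local (fr i) v <> (0, 0)) by (apply to_local_neq0; auto).
  destruct (robot_r2_dec i) as [-> | Hend].
  - pose proof (snap_config_r2 r2 r1 (or_introl eq_refl)) as S1.
    pose proof (snap_config_r2 r2 r3 (or_introl eq_refl)) as S3.
    simpl offset in *; rewrite Ropp_0, pscale_0.
    rewrite Rminus_0_r, pscale_1 in S1; rewrite Rminus_0_r in S3.
    exact (center_dir_center _ _ Hu S1 S3).
  - apply center_dir_end; split; [| split].
    + apply pscale_neq0; [destruct i; simpl; congruence || lra | exact Hu].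
    + pose proof (snap_config_r2 i r2 (or_intror eq_refl)) as S2.
      simpl offset in S2; rewrite Rminus_0_l in S2; exact S2.
    + intros x Hx; destruct (snap_config_inv i x Hx) as [j ->].
      destruct (offset_from_end i j Hend) as [E | [E | E]]; rewrite E.
      * left; apply pscale_0.
      * right; left; reflexivity.
      * right; right; apply pscale_mul.
Qed.

End Snapshots.

Definition colour (inward : bool) : Fin.t 2 := if inward then Fin.F1 else Fin.FS Fin.F1.

Definition is_inward (c : Fin.t 2) : bool := match c with Fin.F1 => true | _ => false end.

Lemma is_inward_colour (b : bool) : is_inward (colour b) = b.
Proof. destruct b; reflexivity. Qed.

Definition move_fraction (inward : bool) : R := if inward then 1 / 3 else - 1 / 2.

Definition eqosc_alg : algorithm (Fin.t 2) :=
  fun c S => (colour (negb (is_inward c)), pscale (move_fraction (is_inward c)) (center_dir S)).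

Lemma step_config (Vr : R) (fr : robot -> frame) (A v : point) (b : bool) :
  (forall i, frame_valid (fr i)) -> v <> (0, 0) -> norm v <= Vr ->
  step eqosc_alg Vr fr (config A v, fun _ => colour b) =
  (config A (pscale (1 - move_fraction b) v), fun _ => colour (negb b)).
Proof.
  intros Hfr Hv HvV; unfold step, eqosc_alg; simpl; rewrite is_inward_colour.
  f_equal; apply functional_extensionality; intros i.
  rewrite center_dir_config, <- pscale_mul, <- to_local_pscale, from_to_local by auto.
  unfold config; point_eq.
Qed.

Definition radius (inward : bool) : R := if inward then 1 else 2 / 3.

Lemma radius_step (b : bool) : radius b * (1 - move_fraction b) = radius (negb b).
Proof. destruct b; simpl; field. Qed.

Lemma exec_eqosc (Vr : R) (fr : robot -> frame) (A w : point) :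
  (forall i, frame_valid (fr i)) -> w <> (0, 0) -> norm w <= Vr -> forall t,
  exec eqosc_alg (colour true) Vr fr (config A w) t =
  (config A (pscale (radius (Nat.even t)) w), fun _ => colour (Nat.even t)).
Proof.
  intros Hfr Hw HwV t; induction t as [| t IH].
  - simpl; rewrite pscale_1; reflexivity.
  - assert (Hr : 0 < radius (Nat.even t) <= 1) by (destruct (Nat.even t); simpl; lra).
    cbn [exec]; rewrite IH, step_config; auto.
    + rewrite <- pscale_mul, Rmult_comm, radius_step, Nat.even_succ, <- Nat.negb_even.
      reflexivity.
    + apply pscale_neq0; [lra | exact Hw].
    + rewrite norm_pscale, Rabs_pos_eq by lra.
      pose proof (norm_ge0 w); nra.
Qed.

Lemma collinear_equidistant_reflection (A B C : point) :
  collinear B A C -> B <> C -> Defs.dist A B = Defs.dist A C -> C = psub (pscale 2 A) B.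
Proof.
  destruct A as [ax ay], B as [bx by0], C as [cx cy].
  unfold collinear, Defs.dist, psub, pscale; simpl; intros Hcol HBC Hd.
  apply sqrt_inj in Hd; try (apply Rplus_le_le_0_compat; apply pow2_ge_0).
  set (ux := bx - ax); set (uy := by0 - ay); set (zx := cx - ax); set (zy := cy - ay).
  set (n := ux ^ 2 + uy ^ 2); set (p := ux * zx + uy * zy).
  assert (Hc : ux * zy - uy * zx = 0) by (unfold ux, uy, zx, zy; lra).
  assert (Hz : zx ^ 2 + zy ^ 2 = n) by (unfold n, ux, uy, zx, zy; lra).
  (* Lagrange's identity p^2 + (u x z)^2 = |u|^2 |z|^2 *)
  assert (Hp : (p - n) * (p + n) = 0).
  { replace ((p - n) * (p + n)) with (n * (zx ^ 2 + zy ^ 2 - n) - (ux * zy - uy * zx) ^ 2)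
      by (unfold p, n; ring).
    rewrite Hc, Hz; ring. }
  destruct (Rmult_integral _ _ Hp) as [Hpn | Hpn].
  - exfalso; apply HBC.
    assert (Hzu : Rsqr (zx - ux) + Rsqr (zy - uy) = 0).
    { replace (Rsqr (zx - ux) + Rsqr (zy - uy)) with (zx ^ 2 + zy ^ 2 - 2 * p + n)
        by (unfold Rsqr, p, n; ring).
      lra. }
    apply Rplus_sqr_eq_0 in Hzu; unfold ux, uy, zx, zy in Hzu; f_equal; lra.
  - assert (Hzu : Rsqr (zx + ux) + Rsqr (zy + uy) = 0).
    { replace (Rsqr (zx + ux) + Rsqr (zy + uy)) with (zx ^ 2 + zy ^ 2 + 2 * p + n)
        by (unfold Rsqr, p, n; ring).
      lra. }
    apply Rplus_sqr_eq_0 in Hzu; unfold ux, uy, zx, zy in Hzu; f_equal; lra.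
Qed.

Lemma eqosc_spec_alternating (A B : point) (pos : nat -> robot -> point) :
  (forall t, pos t = config A (pscale (radius (Nat.even t)) (psub B A))) ->
  EqOsc_spec A B (psub (pscale 2 A) B) pos.
Proof.
  intros Hpos; unfold EqOsc_spec; cbv zeta; split; [| split].
  - intros t; rewrite Hpos; split; [apply config_r2 |].
    rewrite !dist_config; simpl offset.
    f_equal; unfold Rabs; do 2 destruct (Rcase_abs _); lra.
  - intros t _ _; exists (2 * t + 1)%nat; split; [lia |].
    rewrite Hpos, Nat.even_odd; simpl radius; split; unfold config; point_eq.
  - intros t _ _; exists (2 * (t + 1))%nat; split; [lia |].
    rewrite Hpos, Nat.even_even; simpl radius; split; unfold config; point_eq.
Qed.

Theorem lemma4 : EqOsc_solvable_FSTA_FSYNCH_LV.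
Proof.
  exists 2%nat, (colour true), eqosc_alg.
  intros Vr d A B C fr Hfr _ _ Hcol HBC HAB HAC pos0 Hconn.
  assert (HC : C = psub (pscale 2 A) B)
    by (apply collinear_equidistant_reflection; congruence).
  assert (Hpos0 : pos0 = config A (psub B A)).
  { subst pos0 C; apply functional_extensionality; intros []; unfold config; point_eq. }
  assert (Hw : psub B A <> (0, 0)).
  { intros E; apply HBC; rewrite HC; revert E; destruct A, B.
    unfold psub, pscale; simpl; intros E; injection E; intros; f_equal; lra. }
  rewrite Hpos0 in Hconn |- *; rewrite HC.
  apply eqosc_spec_alternating; intros t.
  rewrite exec_eqosc by eauto using vis_connected_config_norm_le.
  reflexivity.
Qed.
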